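(* Let $\mathfrak{q}$ be a $\mathrm{Lie}$-nilpotent Leibniz algebra of class $k$ and let $0\to\mathfrak{n}\to\mathfrak{g}\xrightarrow{\pi}\mathfrak{q}\to0$ be a $\mathrm{Lie}$-central extension. Fix a free presentation $0\to\mathfrak{r}\to\mathfrak{f}\xrightarrow{\rho}\mathfrak{g}\to0$, put $\mathfrak{s}=\ker(\pi\circ\rho)$, so that $\mathcal{M}^{\mathrm{Lie}}(\mathfrak{q})=\frac{\mathfrak{s}\cap[\mathfrak{f},\mathfrak{f}]_{\mathrm{Lie}}}{[\mathfrak{f},\mathfrak{s}]_{\mathrm{Lie}}}$, and let $\theta:\mathcal{M}^{\mathrm{Lie}}(\mathfrak{q})\to\mathfrak{n}$ be $\theta(x+[\mathfrak{f},\mathfrak{s}]_{\mathrm{Lie}})=\rho(x)$. Let $\tau:\mathcal{M}^{\mathrm{Lie}}(\mathfrak{q})\to\mathcal{M}^{\mathrm{Lie}}(\mathfrak{q}/\mathfrak{q}^{[k]})$ be the map induced by the canonical projection $\mathfrak{q}\twoheadrightarrow\mathfrak{q}/\mathfrak{q}^{[k]}$ (concretely, with $\mathfrak{t}=\ker(\mathfrak{f}\to\mathfrak{q}/\mathfrak{q}^{[k]})$, $\tau(x+[\mathfrak{f},\mathfrak{s}]_{\mathrm{Lie}})=x+[\mathfrak{f},\mathfrak{t}]_{\mathrm{Lie}}$). Then $\mathfrak{g}$ is $\mathrm{Lie}$-nilpotent of class $k$ if and only if $\theta$ vanishes on $\ker(\tau)$.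
   Context: Fix a field $\mathbb{K}$ with $\frac12\in\mathbb{K}$. A Leibniz algebra is a $\mathbb{K}$-vector space with a bilinear bracket satisfying $[x,[y,z]]=[[x,y],z]-[[x,z],y]$. For two-sided ideals $\mathfrak{m},\mathfrak{n}$, $[\mathfrak{m},\mathfrak{n}]_{\mathrm{Lie}}$ is the subspace spanned by all $[m,n]+[n,m]$. $Z_{\mathrm{Lie}}(\mathfrak{g})=\{z:[q,z]+[z,q]=0\ \forall q\}$; a surjection $\mathfrak{g}\to\mathfrak{q}$ is a $\mathrm{Lie}$-central extension if its kernel lies in $Z_{\mathrm{Lie}}(\mathfrak{g})$. Lower $\mathrm{Lie}$-central series: $\mathfrak{h}^{[1]}=\mathfrak{h}$, $\mathfrak{h}^{[i]}=[\mathfrak{h}^{[i-1]},\mathfrak{h}]_{\mathrm{Lie}}$; class $k$ means $\mathfrak{h}^{[k+1]}=0\ne\mathfrak{h}^{[k]}$. For a free presentation $0\to\mathfrak{r}\to\mathfrak{f}\to\mathfrak{g}\to0$ ($\mathfrak{f}$ free Leibniz), $\mathcal{M}^{\mathrm{Lie}}(\mathfrak{g})=\frac{\mathfrak{r}\cap[\mathfrak{f},\mathfrak{f}]_{\mathrm{Lie}}}{[\mathfrak{f},\mathfrak{r}]_{\mathrm{Lie}}}$, independent of the presentation up to isomorphism. *)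

From HB Require Import structures.
From mathcomp Require Import all_boot all_order all_algebra.
Set Implicit Arguments. Unset Strict Implicit. Unset Printing Implicit Defensive.
Import GRing.Theory.
Local Open Scope ring_scope.

(* Subspaces/ideals are represented as predicates (V -> Prop), since the
   algebras (e.g. free ones) are in general infinite dimensional. *)

Section Leibniz.
Variable K : fieldType.

Definition leibniz (V : lmodType K) (br : V -> V -> V) : Prop :=
  [/\ (forall (a : K) (x y z : V), br (a *: x + y) z = a *: br x z + br y z),
      (forall (a : K) (x y z : V), br z (a *: x + y) = a *: br z x + br z y)
    & (forall x y z : V, br x (br y z) = br (br x y) z - br (br x z) y)].

Definition leibniz_hom (V W : lmodType K) (brV : V -> V -> V)
    (brW : W -> W -> W) (f : V -> W) : Prop :=
  (forall (a : K) (x y : V), f (a *: x + y) = a *: f x + f y) /\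
  (forall x y : V, f (brV x y) = brW (f x) (f y)).

Definition surj (A B : Type) (f : A -> B) : Prop := forall b, exists a, f a = b.

Definition free_leibniz (F : lmodType K) (brF : F -> F -> F) : Prop :=
  exists (X : Type) (i : X -> F),
    forall (H : lmodType K) (brH : H -> H -> H), leibniz brH ->
    forall phi : X -> H,
      exists psi : F -> H,
        (leibniz_hom brF brH psi /\ forall x, psi (i x) = phi x) /\
        (forall psi' : F -> H,
            leibniz_hom brF brH psi' /\ (forall x, psi' (i x) = phi x) ->
            forall v, psi' v = psi v).

Section Span.
Variable V : lmodType K.

Definition subspace (P : V -> Prop) : Prop :=
  P 0 /\ forall (a : K) (x y : V), P x -> P y -> P (a *: x + y).

Definition span (S : V -> Prop) : V -> Prop :=
  fun v => forall P, subspace P -> (forall x, S x -> P x) -> P v.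

Variable br : V -> V -> V.

Definition lie_br (M N : V -> Prop) : V -> Prop :=
  span (fun v => exists m n, [/\ M m, N n & v = br m n + br n m]).

Definition setT_ : V -> Prop := fun _ => True.

Definition lie_center (z : V) : Prop := forall q, br q z + br z q = 0.

(* lcs i = h^[i+1] *)
Fixpoint lcs (i : nat) : V -> Prop :=
  match i with
  | 0 => setT_
  | i'.+1 => lie_br (lcs i') setT_
  end.

(* h^[i] for i >= 1 (lower Lie-central series) *)
Definition lower_lie (i : nat) : V -> Prop := lcs i.-1.

Definition lie_nilpotent_class (k : nat) : Prop :=
  (forall x, lower_lie k.+1 x -> x = 0) /\ (exists x, lower_lie k x /\ x <> 0).

End Span.
End Leibniz.

From Pilot Require Import Defs.
From HB Require Import structures.
From mathcomp Require Import all_boot all_order all_algebra.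
Import GRing.Theory.
Local Open Scope ring_scope.

Set Implicit Arguments. Unset Strict Implicit.

(* If g^[k+1] = 0, then theta kills [f, t]_Lie: rho maps it into
   [g, pi^-1(q^[k])]_Lie, and since ker pi is Lie-central every element of
   pi^-1(q^[k]) differs from an element of g^[k] by a Lie-central one, so this
   bracket lies in g^[k+1].  Conversely, f^[k+1] = [f^[k], f]_Lie lies in s, in
   [f, f]_Lie and in [f, t]_Lie, and it maps onto g^[k+1]; so if theta kills
   ker tau, then g^[k+1] = 0, while g^[k] <> 0 because it maps onto q^[k]. *)

Section LowerLieCentralSeries.
Variable K : fieldType.

Section Subspaces.
Variables V W : lmodType K.

Lemma span_sub (S : V -> Prop) x : S x -> Defs.span S x.
Proof. by move=> Sx P _; apply. Qed.

Lemma span_subspace (S : V -> Prop) : subspace (Defs.span S).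
Proof.
split=> [P [P0 _] _ //|a x y Sx Sy P PP SP].
by apply: PP.2; [apply: Sx | apply: Sy].
Qed.

Lemma span_min (S P : V -> Prop) :
  subspace P -> (forall x, S x -> P x) -> forall x, Defs.span S x -> P x.
Proof. by move=> PP SP x; apply. Qed.

Variable f : {linear V -> W}.

Lemma subspace_preim (P : W -> Prop) :
  subspace P -> subspace (fun v => P (f v)).
Proof.
by case=> P0 PD; split=> [|a x y Px Py]; rewrite ?linear0 ?linearP; auto.
Qed.

Lemma subspace_image (P : V -> Prop) :
  subspace P -> subspace (fun w => exists2 v, P v & f v = w).
Proof.
case=> P0 PD; split=> [|a _ _ [x Px <-] [y Py <-]].
  by exists 0; rewrite ?linear0.
by exists (a *: x + y); rewrite ?linearP; auto.
Qed.

End Subspaces.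

Definition linear_of_hom (V W : lmodType K) (brV : V -> V -> V)
    (brW : W -> W -> W) (f : V -> W) (hf : leibniz_hom brV brW f) :
  {linear V -> W} := HB.pack f (GRing.isLinear.Build K V W *:%R f hf.1).

Section LieBracket.
Variables (V W : lmodType K) (brV : V -> V -> V) (brW : W -> W -> W).
Variables (f : V -> W) (hf : leibniz_hom brV brW f).
Let fL := linear_of_hom hf.

Lemma leibniz_hom0 : f 0 = 0. Proof. exact: linear0 fL. Qed.
Lemma leibniz_homB : {morph f : x y / x - y}. Proof. exact: linearB fL. Qed.

Lemma lie_br_hom (M N : V -> Prop) (M' N' : W -> Prop) :
  (forall x, M x -> M' (f x)) -> (forall x, N x -> N' (f x)) ->
  forall x, lie_br brV M N x -> lie_br brW M' N' (f x).
Proof.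
move=> MM' NN'; apply: (span_min (subspace_preim fL (span_subspace _))).
move=> _ [m [n [Mm Nn ->]]]; apply: span_sub; exists (f m), (f n).
by rewrite (linearD fL) /= !hf.2; split; auto.
Qed.

Lemma lie_br_lift (M N : V -> Prop) (M' N' : W -> Prop) :
  (forall y, M' y -> exists2 x, M x & f x = y) ->
  (forall y, N' y -> exists2 x, N x & f x = y) ->
  forall y, lie_br brW M' N' y -> exists2 x, lie_br brV M N x & f x = y.
Proof.
move=> liftM liftN; apply: (span_min (subspace_image fL (span_subspace _))).
move=> _ [_ [_ [/liftM[m Mm <-] /liftN[n Nn <-] ->]]].
exists (brV m n + brV n m); first by apply: span_sub; exists m, n.
by rewrite (linearD fL) /= !hf.2.
Qed.

Lemma lcs_hom i x : lcs brV i x -> lcs brW i (f x).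
Proof. by elim: i x => [//|i IHi] x /=; apply: lie_br_hom. Qed.

Lemma lcs_lift :
  surj f -> forall i y, lcs brW i y -> exists2 x, lcs brV i x & f x = y.
Proof.
move=> surj_f; elim=> [|i IHi] y /=; first by have [x <-] := surj_f y; exists x.
by apply: lie_br_lift => // {}y _; have [x <-] := surj_f y; exists x.
Qed.

End LieBracket.

Section LieBracketSubsets.
Variables (V : lmodType K) (br : V -> V -> V).

Lemma lie_br_mono (M N M' N' : V -> Prop) :
  (forall x, M x -> M' x) -> (forall x, N x -> N' x) ->
  forall x, lie_br br M N x -> lie_br br M' N' x.
Proof. by apply: (@lie_br_hom V V br br id). Qed.

Lemma lie_br_comm (M N : V -> Prop) x : lie_br br M N x -> lie_br br N M x.
Proof.
apply: span_min; first exact: span_subspace.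
by move=> _ [m [n [Mm Nn ->]]]; apply: span_sub; exists n, m; rewrite addrC.
Qed.

Lemma leibniz_brDl : leibniz br -> forall x y z, br (x + y) z = br x z + br y z.
Proof. by case=> brZl _ _ x y z; have := brZl 1 x y z; rewrite !scale1r. Qed.

Lemma leibniz_brDr : leibniz br -> forall x y z, br z (x + y) = br z x + br z y.
Proof. by case=> _ brZr _ x y z; have := brZr 1 x y z; rewrite !scale1r. Qed.

Lemma lie_nilpotent_class_gt0 k : lie_nilpotent_class br k -> (0 < k)%N.
Proof. by case: k => // -[V0 [x [_ x_neq0]]]; case: x_neq0; apply: V0. Qed.

End LieBracketSubsets.

Section LieCentralExtension.
Variables (G Q : lmodType K) (brG : G -> G -> G) (brQ : Q -> Q -> Q).
Hypothesis LG : leibniz brG.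
Variables (pi : G -> Q) (hom_pi : leibniz_hom brG brQ pi) (surj_pi : surj pi).
Hypothesis central : forall x : G, pi x = 0 -> lie_center brG x.

Lemma lie_br_preim_lcs i x :
  lie_br brG (@setT_ K G) (fun n => lcs brQ i (pi n)) x -> lcs brG i.+1 x.
Proof.
apply: span_min; first exact: span_subspace.
move=> _ [a [n [_ Qn ->]]]; have [b Gb pib] := lcs_lift hom_pi surj_pi Qn.
have z_central : lie_center brG (n - b).
  by apply: central; rewrite (leibniz_homB hom_pi) pib subrr.
have -> : brG a n + brG n a = brG b a + brG a b.
  rewrite -[n](subrK b) (leibniz_brDl LG) (leibniz_brDr LG).
  by rewrite addrACA z_central add0r addrC.
by apply: span_sub; exists b, a.
Qed.

End LieCentralExtension.

End LowerLieCentralSeries.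

Theorem mainTheorem9 (K : fieldType) (two_unit : (2 : K) != 0)
  (Q : lmodType K) (brQ : Q -> Q -> Q) (LQ : leibniz brQ)
  (G : lmodType K) (brG : G -> G -> G) (LG : leibniz brG)
  (F : lmodType K) (brF : F -> F -> F) (LF : leibniz brF)
  (freeF : free_leibniz brF)
  (pi : G -> Q) (hom_pi : leibniz_hom brG brQ pi) (surj_pi : surj pi)
  (central : forall x : G, pi x = 0 -> lie_center brG x)
  (rho : F -> G) (hom_rho : leibniz_hom brF brG rho) (surj_rho : surj rho)
  (k : nat) (classQ : lie_nilpotent_class brQ k) :
  let s : F -> Prop := fun x => pi (rho x) = 0 in
  let t : F -> Prop := fun x => lower_lie brQ k (pi (rho x)) in
  lie_nilpotent_class brG k <->
  (forall x : F, s x -> lie_br brF (@setT_ K F) (@setT_ K F) x ->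
     lie_br brF (@setT_ K F) t x -> rho x = 0).
Proof.
case: k classQ => [/lie_nilpotent_class_gt0 // | k] [Q0 [q [Qq q_neq0]]] s t.
have lcs_pi_rho i x : lcs brF i x -> lcs brQ i (pi (rho x)).
  by move=> /(lcs_hom hom_rho); apply: lcs_hom.
split=> [[G0 _] x _ _ ft_x | theta_ker].
  have rho_x : lie_br brG (@setT_ K G) (fun n => lcs brQ k (pi n)) (rho x).
    by apply: (lie_br_hom hom_rho) ft_x => [y _|y]; [exact: I | apply].
  by apply: G0; apply: (lie_br_preim_lcs LG hom_pi surj_pi central rho_x).
split=> [y /(lcs_lift hom_rho surj_rho)[x Fx <-] | ].
  apply: theta_ker; first exact/Q0/lcs_pi_rho.
    exact: lie_br_mono Fx.
  by apply: lie_br_mono (lie_br_comm Fx) => // z /lcs_pi_rho.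
have [y Gy pi_y] := lcs_lift hom_pi surj_pi Qq.
exists y; split=> // y0; apply: q_neq0.
by rewrite -pi_y y0 (leibniz_hom0 hom_pi).
Qed.
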